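(* Let $\mathscr{V}$ be a braided monoidal category, let $A=(A,\mu_A,\eta_A)$ be a monoid and $B=(B,\mu_B,\eta_B,\delta_B,\varepsilon_B)$ a bimonoid in $\mathscr{V}$, and let $(\gamma,\tau)$ be a twisted right coaction of $B$ on $A$. Define $$z=(\eta_A\otimes 1_B)\bullet\gamma\colon B\otimes A\to A\otimes B,\qquad d=(\eta_A\otimes\delta_B)\bullet\tau\colon B\to A\otimes B\otimes B,\qquad w=\eta_A\circ\varepsilon_B\colon B\to A,$$ where the first dot product is taken in the monoid $A\otimes B$ (with $\eta_A\otimes 1_B\colon B\cong I\otimes B\to A\otimes B$) and the second in the monoid $A\otimes B\otimes B$ (with $B\otimes I\cong B$). Then $(B,d,w,z)$ is a mixed opwreath around the monoid $A$ in $\mathscr{V}$.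
   Context: Associativity and unit constraints of $\mathscr{V}$ are suppressed; $c$ denotes the braiding. For monoids $M,N$, $M\otimes N$ is a monoid with multiplication $(\mu_M\otimes\mu_N)\circ(1_M\otimes c_{N,M}\otimes 1_N)$ and unit $\eta_M\otimes\eta_N$. A bimonoid $B$ is a monoid and comonoid $(B,\delta_B,\varepsilon_B)$ such that $\delta_B\colon B\to B\otimes B$ and $\varepsilon_B\colon B\to I$ are monoid morphisms. For a monoid $M$ and morphisms $u\colon X\to M$, $v\colon Y\to M$, the dot product is $u\bullet v=\mu_M\circ(u\otimes v)\colon X\otimes Y\to M$. A twisted right coaction of the bimonoid $B$ on the monoid $A$ consists of a monoid morphism $\gamma\colon A\to A\otimes B$ and a morphism $\tau\colon I\to A\otimes B\otimes B$ such that: (counitality) $(1_A\otimes\varepsilon_B)\circ\gamma=1_A$; ($\tau$-coassociativity) $\tau\bullet((\gamma\otimes 1_B)\circ\gamma)=((1_A\otimes\delta_B)\circ\gamma)\bullet\tau$ (morphisms $A\to A\otimes B\otimes B$, dot in the monoid $A\otimes B\otimes B$); (2-cocyclicity) $((1_A\otimes\delta_B\otimes 1_B)\circ\tau)\bullet(\tau\otimes\eta_B)=((1_{A\otimes B}\otimes\delta_B)\circ\tau)\bullet((\gamma\otimes 1_{B\otimes B})\circ\tau)$ (morphisms $I\to A\otimes B^{\otimes 3}$, dot in $A\otimes B^{\otimes 3}$); (normality) $(1_{A\otimes B}\otimes\varepsilon_B)\circ\tau=\eta_A\otimes\eta_B=(1_A\otimes\varepsilon_B\otimes 1_B)\circ\tau$.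 ($\tau$ is not required to be $\bullet$-invertible.) A mixed opwreath around a monoid $A=(A,m,j)$ in $\mathscr{V}$ is a quadruple $(C,d,w,z)$ of an object $C$ and morphisms $d\colon C\to A\otimes C\otimes C$, $w\colon C\to A$, $z\colon C\otimes A\to A\otimes C$ satisfying: (1) $z\circ(1_C\otimes m)=(m\otimes 1_C)\circ(1_A\otimes z)\circ(z\otimes 1_A)$; (2) $z\circ(1_C\otimes j)=j\otimes 1_C$; (3) $m\circ(w\otimes 1_A)=m\circ(1_A\otimes w)\circ z$; (4) $(m\otimes 1_{C\otimes C})\circ(1_A\otimes z\otimes 1_C)\circ(1_{A\otimes C}\otimes z)\circ(d\otimes 1_A)=(m\otimes 1_{C\otimes C})\circ(1_A\otimes d)\circ z$; (5) $(m\otimes 1_{C^{\otimes 3}})\circ(1_A\otimes d\otimes 1_C)\circ d=(m\otimes 1_{C^{\otimes 3}})\circ(1_A\otimes z\otimes 1_{C\otimes C})\circ(1_{A\otimes C}\otimes d)\circ d$; (6) $(m\otimes 1_C)\circ(1_A\otimes w\otimes 1_C)\circ d=j\otimes 1_C$; (7) $(m\otimes 1_C)\circ(1_A\otimes z)\circ(1_{A\otimes C}\otimes w)\circ d=j\otimes 1_C$. *)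

(* Convention: n-fold tensor products are bracketed to the RIGHT,
   e.g.  A (x) B (x) B := A (x) (B (x) B). *)

Set Implicit Arguments.
Unset Strict Implicit.

Record BMC : Type := {
  Ob : Type;
  Hom : Ob -> Ob -> Type;
  comp : forall a b c : Ob, Hom b c -> Hom a b -> Hom a c;
  idm : forall a : Ob, Hom a a;
  ten : Ob -> Ob -> Ob;
  tenm : forall a b c d : Ob, Hom a b -> Hom c d -> Hom (ten a c) (ten b d);
  tunit : Ob;
  asc  : forall a b c : Ob, Hom (ten (ten a b) c) (ten a (ten b c));
  asci : forall a b c : Ob, Hom (ten a (ten b c)) (ten (ten a b) c);
  lu   : forall a : Ob, Hom (ten tunit a) a;
  lui  : forall a : Ob, Hom a (ten tunit a);
  ru   : forall a : Ob, Hom (ten a tunit) a;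
  rui  : forall a : Ob, Hom a (ten a tunit);
  br   : forall a b : Ob, Hom (ten a b) (ten b a);
  bri  : forall a b : Ob, Hom (ten b a) (ten a b)
}.

Arguments Hom {_} _ _.
Arguments comp {_ _ _ _} _ _.
Arguments idm {_} _.
Arguments ten {_} _ _.
Arguments tenm {_ _ _ _ _} _ _.
Arguments tunit {_}.
Arguments asc {_} _ _ _.
Arguments asci {_} _ _ _.
Arguments lu {_} _.
Arguments lui {_} _.
Arguments ru {_} _.
Arguments rui {_} _.
Arguments br {_} _ _.
Arguments bri {_} _ _.

Declare Scope bmc_scope.
Open Scope bmc_scope.
Notation "g ∘ f" := (comp g f) (at level 40, left associativity) : bmc_scope.
Notation "f ⊗ g" := (tenm f g) (at level 30, right associativity) : bmc_scope.
Notation "a ⊠ b" := (ten a b) (at level 30, right associativity) : bmc_scope.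

Record is_braided_monoidal (C : BMC) : Prop := {
  comp_assoc : forall (a b c d : Ob C) (f : Hom a b) (g : Hom b c) (h : Hom c d),
      h ∘ (g ∘ f) = (h ∘ g) ∘ f;
  comp_id_l : forall (a b : Ob C) (f : Hom a b), idm b ∘ f = f;
  comp_id_r : forall (a b : Ob C) (f : Hom a b), f ∘ idm a = f;
  ten_id : forall a b : Ob C, (idm a ⊗ idm b) = idm (a ⊠ b);
  ten_comp : forall (a1 a2 a3 b1 b2 b3 : Ob C) (f1 : Hom a1 a2) (f2 : Hom a2 a3)
      (g1 : Hom b1 b2) (g2 : Hom b2 b3),
      ((f2 ∘ f1) ⊗ (g2 ∘ g1)) = (f2 ⊗ g2) ∘ (f1 ⊗ g1);
  asc_nat : forall (a a' b b' c c' : Ob C) (f : Hom a a') (g : Hom b b') (h : Hom c c'),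
      asc a' b' c' ∘ ((f ⊗ g) ⊗ h) = (f ⊗ (g ⊗ h)) ∘ asc a b c;
  asc_asci : forall a b c : Ob C, asc a b c ∘ asci a b c = idm _;
  asci_asc : forall a b c : Ob C, asci a b c ∘ asc a b c = idm _;
  lu_nat : forall (a a' : Ob C) (f : Hom a a'), lu a' ∘ (idm tunit ⊗ f) = f ∘ lu a;
  lu_lui : forall a : Ob C, lu a ∘ lui a = idm _;
  lui_lu : forall a : Ob C, lui a ∘ lu a = idm _;
  ru_nat : forall (a a' : Ob C) (f : Hom a a'), ru a' ∘ (f ⊗ idm tunit) = f ∘ ru a;
  ru_rui : forall a : Ob C, ru a ∘ rui a = idm _;
  rui_ru : forall a : Ob C, rui a ∘ ru a = idm _;
  pentagon : forall a b c d : Ob C,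
      asc a b (c ⊠ d) ∘ asc (a ⊠ b) c d
      = (idm a ⊗ asc b c d) ∘ asc a (b ⊠ c) d ∘ (asc a b c ⊗ idm d);
  triangle : forall a b : Ob C,
      (idm a ⊗ lu b) ∘ asc a tunit b = (ru a ⊗ idm b);
  br_nat : forall (a a' b b' : Ob C) (f : Hom a a') (g : Hom b b'),
      br a' b' ∘ (f ⊗ g) = (g ⊗ f) ∘ br a b;
  br_bri : forall a b : Ob C, br a b ∘ bri a b = idm _;
  bri_br : forall a b : Ob C, bri a b ∘ br a b = idm _;
  hexagon1 : forall a b c : Ob C,
      asc b c a ∘ br a (b ⊠ c) ∘ asc a b c
      = (idm b ⊗ br a c) ∘ asc b a c ∘ (br a b ⊗ idm c);
  hexagon2 : forall a b c : Ob C,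
      asci c a b ∘ br (a ⊠ b) c ∘ asci a b c
      = (br a c ⊗ idm b) ∘ asci a c b ∘ (idm a ⊗ br b c)
}.

Section Monoidal.
Variable C : BMC.

Definition is_monoid (M : Ob C) (m : Hom (M ⊠ M) M) (e : Hom tunit M) : Prop :=
  m ∘ (m ⊗ idm M) = m ∘ (idm M ⊗ m) ∘ asc M M M
  /\ m ∘ (e ⊗ idm M) = lu M
  /\ m ∘ (idm M ⊗ e) = ru M.

Definition is_comonoid (B : Ob C) (del : Hom B (B ⊠ B)) (eps : Hom B tunit) : Prop :=
  asc B B B ∘ (del ⊗ idm B) ∘ del = (idm B ⊗ del) ∘ del
  /\ lu B ∘ (eps ⊗ idm B) ∘ del = idm B
  /\ ru B ∘ (idm B ⊗ eps) ∘ del = idm B.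

Definition is_monoid_morphism (M N : Ob C) (m : Hom (M ⊠ M) M) (e : Hom tunit M)
    (n : Hom (N ⊠ N) N) (u : Hom tunit N) (f : Hom M N) : Prop :=
  f ∘ m = n ∘ (f ⊗ f) /\ f ∘ e = u.

(* Multiplication of the tensor product monoid M (x) N:
   (mu_M (x) mu_N) o (1_M (x) c_{N,M} (x) 1_N), with the associativity
   constraints written out. *)
Definition tensor_mult (M N : Ob C) (mM : Hom (M ⊠ M) M) (mN : Hom (N ⊠ N) N)
    : Hom ((M ⊠ N) ⊠ (M ⊠ N)) (M ⊠ N) :=
  (mM ⊗ mN) ∘ asci M M (N ⊠ N) ∘ (idm M ⊗ asc M N N)
  ∘ (idm M ⊗ (br N M ⊗ idm N)) ∘ (idm M ⊗ asci N M N) ∘ asc M N (M ⊠ N).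

Definition tensor_unit (M N : Ob C) (eM : Hom tunit M) (eN : Hom tunit N)
    : Hom tunit (M ⊠ N) :=
  (eM ⊗ eN) ∘ lui tunit.

Definition unit_mult : Hom (tunit ⊠ tunit) (tunit : Ob C) := lu tunit.

Definition dot (M X Y : Ob C) (mu : Hom (M ⊠ M) M) (u : Hom X M) (v : Hom Y M)
    : Hom (X ⊠ Y) M :=
  mu ∘ (u ⊗ v).

Definition is_bimonoid (B : Ob C) (mB : Hom (B ⊠ B) B) (eB : Hom tunit B)
    (del : Hom B (B ⊠ B)) (eps : Hom B tunit) : Prop :=
  is_monoid mB eB /\ is_comonoid del eps
  /\ is_monoid_morphism mB eB (tensor_mult mB mB) (tensor_unit eB eB) del
  /\ is_monoid_morphism mB eB unit_mult (idm tunit) eps.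

Section Twisted.
Variables (A B : Ob C) (mA : Hom (A ⊠ A) A) (eA : Hom tunit A)
          (mB : Hom (B ⊠ B) B) (eB : Hom tunit B)
          (del : Hom B (B ⊠ B)) (eps : Hom B tunit).

Definition mAB : Hom ((A ⊠ B) ⊠ (A ⊠ B)) (A ⊠ B) := tensor_mult mA mB.
Definition eAB : Hom tunit (A ⊠ B) := tensor_unit eA eB.
Definition mBB : Hom ((B ⊠ B) ⊠ (B ⊠ B)) (B ⊠ B) := tensor_mult mB mB.
Definition eBB : Hom tunit (B ⊠ B) := tensor_unit eB eB.
Definition mABB : Hom ((A ⊠ B ⊠ B) ⊠ (A ⊠ B ⊠ B)) (A ⊠ B ⊠ B) := tensor_mult mA mBB.
Definition mBBB : Hom ((B ⊠ B ⊠ B) ⊠ (B ⊠ B ⊠ B)) (B ⊠ B ⊠ B) := tensor_mult mB mBB.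
Definition mABBB : Hom ((A ⊠ B ⊠ B ⊠ B) ⊠ (A ⊠ B ⊠ B ⊠ B)) (A ⊠ B ⊠ B ⊠ B) :=
  tensor_mult mA mBBB.

Definition is_twisted_coaction (gamma : Hom A (A ⊠ B)) (tau : Hom tunit (A ⊠ B ⊠ B))
    : Prop :=
  is_monoid_morphism mA eA mAB eAB gamma
  /\ ru A ∘ (idm A ⊗ eps) ∘ gamma = idm A
  /\ dot mABB tau (asc A B B ∘ (gamma ⊗ idm B) ∘ gamma) ∘ lui A
     = dot mABB ((idm A ⊗ del) ∘ gamma) tau ∘ rui A
  /\ dot mABBB ((idm A ⊗ (asc B B B ∘ (del ⊗ idm B))) ∘ tau)
               ((idm A ⊗ asc B B B) ∘ asc A (B ⊠ B) B ∘ (tau ⊗ eB) ∘ lui tunit) ∘ lui tunit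
     = dot mABBB ((idm A ⊗ (idm B ⊗ del)) ∘ tau)
               (asc A B (B ⊠ B) ∘ (gamma ⊗ idm (B ⊠ B)) ∘ tau) ∘ lui tunit
  /\ (idm A ⊗ ru B) ∘ (idm A ⊗ (idm B ⊗ eps)) ∘ tau = (eA ⊗ eB) ∘ lui tunit
  /\ (idm A ⊗ lu B) ∘ (idm A ⊗ (eps ⊗ idm B)) ∘ tau = (eA ⊗ eB) ∘ lui tunit.

Definition z_of (gamma : Hom A (A ⊠ B)) : Hom (B ⊠ A) (A ⊠ B) :=
  dot mAB ((eA ⊗ idm B) ∘ lui B) gamma.

Definition d_of (tau : Hom tunit (A ⊠ B ⊠ B)) : Hom B (A ⊠ B ⊠ B) :=
  dot mABB ((eA ⊗ del) ∘ lui B) tau ∘ rui B.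

Definition w_of : Hom B A := eA ∘ eps.

End Twisted.

Definition is_mixed_opwreath (A : Ob C) (m : Hom (A ⊠ A) A) (j : Hom tunit A)
    (C0 : Ob C) (d : Hom C0 (A ⊠ C0 ⊠ C0)) (w : Hom C0 A) (z : Hom (C0 ⊠ A) (A ⊠ C0))
    : Prop :=
  z ∘ (idm C0 ⊗ m)
    = (m ⊗ idm C0) ∘ asci A A C0 ∘ (idm A ⊗ z) ∘ asc A C0 A ∘ (z ⊗ idm A)
      ∘ asci C0 A A
  /\ z ∘ (idm C0 ⊗ j) ∘ rui C0 = (j ⊗ idm C0) ∘ lui C0
  /\ m ∘ (w ⊗ idm A) = m ∘ (idm A ⊗ w) ∘ z
  /\ (m ⊗ idm (C0 ⊠ C0)) ∘ asci A A (C0 ⊠ C0)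
       ∘ (idm A ⊗ asc A C0 C0) ∘ (idm A ⊗ (z ⊗ idm C0)) ∘ (idm A ⊗ asci C0 A C0)
       ∘ (idm A ⊗ (idm C0 ⊗ z)) ∘ (idm A ⊗ asc C0 C0 A) ∘ asc A (C0 ⊠ C0) A
       ∘ (d ⊗ idm A)
     = (m ⊗ idm (C0 ⊠ C0)) ∘ asci A A (C0 ⊠ C0) ∘ (idm A ⊗ d) ∘ z
  /\ (m ⊗ idm (C0 ⊠ C0 ⊠ C0)) ∘ asci A A (C0 ⊠ C0 ⊠ C0)
       ∘ (idm A ⊗ (idm A ⊗ asc C0 C0 C0)) ∘ (idm A ⊗ asc A (C0 ⊠ C0) C0)
       ∘ (idm A ⊗ (d ⊗ idm C0)) ∘ d
     = (m ⊗ idm (C0 ⊠ C0 ⊠ C0)) ∘ asci A A (C0 ⊠ C0 ⊠ C0)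
       ∘ (idm A ⊗ asc A C0 (C0 ⊠ C0)) ∘ (idm A ⊗ (z ⊗ idm (C0 ⊠ C0)))
       ∘ (idm A ⊗ asci C0 A (C0 ⊠ C0)) ∘ (idm A ⊗ (idm C0 ⊗ d)) ∘ d
  /\ (m ⊗ idm C0) ∘ asci A A C0 ∘ (idm A ⊗ (w ⊗ idm C0)) ∘ d = (j ⊗ idm C0) ∘ lui C0
  /\ (m ⊗ idm C0) ∘ asci A A C0 ∘ (idm A ⊗ z) ∘ (idm A ⊗ (idm C0 ⊗ w)) ∘ d
     = (j ⊗ idm C0) ∘ lui C0.

End Monoidal.

(* By coherence, an object word acts on the right on right-bracketed,
   unit-free normal forms, and there every structural isomorphism acts as
   the identity.  Both sides of each axiom are therefore compared as strict
   composites of generators, and the proof becomes a rewriting problem: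
   interchange of generators acting on disjoint factors, sliding generators
   through braidings, and the hypotheses.  In element notation
   z (b ⊗ a) = (1 ⊗ b) γ(a), d b = (1 ⊗ δ b) τ and w = η ε.  Axioms (1), (2)
   are multiplicativity and unitality of γ, (3) is counitality of γ with
   multiplicativity of ε, (4) is τ-coassociativity, (5) is the 2-cocycle
   condition with coassociativity of δ, and (6), (7) are normality of τ with
   counitality of δ. *)

From Stdlib Require Import Setoid List.
Import ListNotations.
Set Implicit Arguments.
Unset Strict Implicit.

Existing Class is_braided_monoidal.
Arguments comp_assoc {C i a b c d} f g h.
Arguments comp_id_l {C i a b} f.
Arguments comp_id_r {C i a b} f.
Arguments ten_id {C i} a b.
Arguments ten_comp {C i a1 a2 a3 b1 b2 b3} f1 f2 g1 g2.
Arguments asc_nat {C i a a' b b' c c'} f g h.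
Arguments asc_asci {C i} a b c.
Arguments asci_asc {C i} a b c.
Arguments lu_nat {C i a a'} f.
Arguments lu_lui {C i} a.
Arguments lui_lu {C i} a.
Arguments ru_nat {C i a a'} f.
Arguments ru_rui {C i} a.
Arguments rui_ru {C i} a.
Arguments pentagon {C i} a b c d.
Arguments triangle {C i} a b.
Arguments br_nat {C i a a' b b'} f g.
Arguments bri_br {C i} a b.
Arguments hexagon1 {C i} a b c.
Arguments hexagon2 {C i} a b c.

Section Chains.
Context {C : BMC} {HC : is_braided_monoidal C}.

(* Composites are kept left-associated; these let a rewrite act on a
   segment [f1 ∘ ... ∘ fn] of such a chain. *)
Lemma chain_congr2 {a0 a1 a2 d : Ob C}
    (f1 : Hom a1 a2) (f2 : Hom a0 a1) (h : Hom a0 a2) (k : Hom a2 d) :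
  f1 ∘ f2 = h -> k ∘ f1 ∘ f2 = k ∘ h.
Proof. intros E; rewrite <- E; now rewrite comp_assoc. Qed.
Lemma chain_congr3 {a0 a1 a2 a3 d : Ob C}
    (f1 : Hom a2 a3) (f2 : Hom a1 a2) (f3 : Hom a0 a1) (h : Hom a0 a3) (k : Hom a3 d) :
  f1 ∘ f2 ∘ f3 = h -> k ∘ f1 ∘ f2 ∘ f3 = k ∘ h.
Proof. intros E; rewrite <- E; now rewrite !comp_assoc. Qed.
Lemma chain_congr4 {a0 a1 a2 a3 a4 d : Ob C}
    (f1 : Hom a3 a4) (f2 : Hom a2 a3) (f3 : Hom a1 a2) (f4 : Hom a0 a1) (h : Hom a0 a4)
    (k : Hom a4 d) :
  f1 ∘ f2 ∘ f3 ∘ f4 = h -> k ∘ f1 ∘ f2 ∘ f3 ∘ f4 = k ∘ h.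
Proof. intros E; rewrite <- E; now rewrite !comp_assoc. Qed.
Lemma chain_congr5 {a0 a1 a2 a3 a4 a5 d : Ob C}
    (f1 : Hom a4 a5) (f2 : Hom a3 a4) (f3 : Hom a2 a3) (f4 : Hom a1 a2) (f5 : Hom a0 a1)
    (h : Hom a0 a5) (k : Hom a5 d) :
  f1 ∘ f2 ∘ f3 ∘ f4 ∘ f5 = h -> k ∘ f1 ∘ f2 ∘ f3 ∘ f4 ∘ f5 = k ∘ h.
Proof. intros E; rewrite <- E; now rewrite !comp_assoc. Qed.
Lemma chain_congr6 {a0 a1 a2 a3 a4 a5 a6 d : Ob C}
    (f1 : Hom a5 a6) (f2 : Hom a4 a5) (f3 : Hom a3 a4) (f4 : Hom a2 a3) (f5 : Hom a1 a2)
    (f6 : Hom a0 a1) (h : Hom a0 a6) (k : Hom a6 d) :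
  f1 ∘ f2 ∘ f3 ∘ f4 ∘ f5 ∘ f6 = h -> k ∘ f1 ∘ f2 ∘ f3 ∘ f4 ∘ f5 ∘ f6 = k ∘ h.
Proof. intros E; rewrite <- E; now rewrite !comp_assoc. Qed.
Lemma chain_congr7 {a0 a1 a2 a3 a4 a5 a6 a7 d : Ob C}
    (f1 : Hom a6 a7) (f2 : Hom a5 a6) (f3 : Hom a4 a5) (f4 : Hom a3 a4) (f5 : Hom a2 a3)
    (f6 : Hom a1 a2) (f7 : Hom a0 a1) (h : Hom a0 a7) (k : Hom a7 d) :
  f1 ∘ f2 ∘ f3 ∘ f4 ∘ f5 ∘ f6 ∘ f7 = h -> k ∘ f1 ∘ f2 ∘ f3 ∘ f4 ∘ f5 ∘ f6 ∘ f7 = k ∘ h.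
Proof. intros E; rewrite <- E; now rewrite !comp_assoc. Qed.
Lemma chain_congr8 {a0 a1 a2 a3 a4 a5 a6 a7 a8 d : Ob C}
    (f1 : Hom a7 a8) (f2 : Hom a6 a7) (f3 : Hom a5 a6) (f4 : Hom a4 a5) (f5 : Hom a3 a4)
    (f6 : Hom a2 a3) (f7 : Hom a1 a2) (f8 : Hom a0 a1) (h : Hom a0 a8) (k : Hom a8 d) :
  f1 ∘ f2 ∘ f3 ∘ f4 ∘ f5 ∘ f6 ∘ f7 ∘ f8 = h ->
  k ∘ f1 ∘ f2 ∘ f3 ∘ f4 ∘ f5 ∘ f6 ∘ f7 ∘ f8 = k ∘ h.
Proof. intros E; rewrite <- E; now rewrite !comp_assoc. Qed.

Definition whisk (o : Ob C) {s t : Ob C} (h : Hom s t) : Hom (o ⊠ s) (o ⊠ t) := idm o ⊗ h.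
Arguments whisk : simpl never.

Lemma ten_comp_l {a1 a2 a3 b : Ob C} (f1 : Hom a1 a2) (f2 : Hom a2 a3) :
  ((f2 ∘ f1) ⊗ idm b) = (f2 ⊗ idm b) ∘ (f1 ⊗ idm b).
Proof. rewrite <- ten_comp, comp_id_l. reflexivity. Qed.
Lemma ten_comp_r {a b1 b2 b3 : Ob C} (f1 : Hom b1 b2) (f2 : Hom b2 b3) :
  (idm a ⊗ (f2 ∘ f1)) = (idm a ⊗ f2) ∘ (idm a ⊗ f1).
Proof. rewrite <- ten_comp, comp_id_l. reflexivity. Qed.
Lemma ten_split {a b c d : Ob C} (f : Hom a b) (g : Hom c d) :
  (f ⊗ g) = (f ⊗ idm d) ∘ (idm a ⊗ g).
Proof. rewrite <- ten_comp, comp_id_l, comp_id_r. reflexivity. Qed.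
Lemma ten_interchange {a b c d : Ob C} (f : Hom a b) (g : Hom c d) :
  (f ⊗ idm d) ∘ (idm a ⊗ g) = (idm b ⊗ g) ∘ (f ⊗ idm c).
Proof. rewrite <- !ten_comp, !comp_id_l, !comp_id_r. reflexivity. Qed.

Lemma whisk_id (o s : Ob C) : whisk o (idm s) = idm _. Proof. apply ten_id. Qed.
Lemma whisk_comp (o : Ob C) {a b c : Ob C} (g : Hom b c) (f : Hom a b) :
  whisk o (g ∘ f) = whisk o g ∘ whisk o f.
Proof. apply ten_comp_r. Qed.
Lemma whisk_congr (a : Ob C) {s t : Ob C} {f g : Hom s t} : f = g -> whisk a f = whisk a g.
Proof. intros E; rewrite E; reflexivity. Qed.
Lemma whisk_square (a : Ob C) {p q r q' : Ob C}
    (f : Hom q r) (g : Hom p q) (g' : Hom q' r) (f' : Hom p q') :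
  f ∘ g = g' ∘ f' -> whisk a f ∘ whisk a g = whisk a g' ∘ whisk a f'.
Proof. intros E. rewrite <- !whisk_comp, E. reflexivity. Qed.

End Chains.

(* Words in objects, and their right-bracketed, unit-free normal forms:
   [oact x t] is [oeval x ⊠ t] with all brackets moved to the right and all
   units deleted.  This is the Cayley-style strictification of [C]. *)
Section Words.
Context (C : BMC).

Inductive oexpr : Type := OAtom (o : Ob C) | OUnit | OTen (x y : oexpr).

Fixpoint oeval (x : oexpr) : Ob C :=
  match x with OAtom o => o | OUnit => tunit | OTen x y => oeval x ⊠ oeval y end.

Fixpoint oact (x : oexpr) (t : Ob C) : Ob C :=
  match x with OAtom o => o ⊠ t | OUnit => t | OTen x y => oact x (oact y t) end.

Fixpoint oact_map (x : oexpr) {s t : Ob C} (h : Hom s t) : Hom (oact x s) (oact x t) :=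
  match x return Hom (oact x s) (oact x t) with
  | OAtom o => whisk o h | OUnit => h | OTen x y => oact_map x (oact_map y h) end.

Fixpoint normalize (x : oexpr) (t : Ob C) : Hom (oeval x ⊠ t) (oact x t) :=
  match x return Hom (oeval x ⊠ t) (oact x t) with
  | OAtom o => idm _
  | OUnit => lu t
  | OTen x y =>
      normalize x (oact y t) ∘ (idm (oeval x) ⊗ normalize y t) ∘ asc (oeval x) (oeval y) t
  end.

Fixpoint denormalize (x : oexpr) (t : Ob C) : Hom (oact x t) (oeval x ⊠ t) :=
  match x return Hom (oact x t) (oeval x ⊠ t) with
  | OAtom o => idm _
  | OUnit => lui t
  | OTen x y =>
      asci (oeval x) (oeval y) t ∘ (idm (oeval x) ⊗ denormalize y t) ∘ denormalize x (oact y t)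
  end.

Inductive hexpr : oexpr -> oexpr -> Type :=
| HId (x : oexpr) : hexpr x x
| HComp {x y z : oexpr} (g : hexpr y z) (f : hexpr x y) : hexpr x z
| HTen {x y x' y' : oexpr} (f : hexpr x y) (g : hexpr x' y') : hexpr (OTen x x') (OTen y y')
| HAsc (x y z : oexpr) : hexpr (OTen (OTen x y) z) (OTen x (OTen y z))
| HAsci (x y z : oexpr) : hexpr (OTen x (OTen y z)) (OTen (OTen x y) z)
| HLu (x : oexpr) : hexpr (OTen OUnit x) x
| HLui (x : oexpr) : hexpr x (OTen OUnit x)
| HRu (x : oexpr) : hexpr (OTen x OUnit) x
| HRui (x : oexpr) : hexpr x (OTen x OUnit)
| HGen {x y : oexpr} (f : Hom (oeval x) (oeval y)) : hexpr x y.

Fixpoint heval {x y : oexpr} (s : hexpr x y) : Hom (oeval x) (oeval y) :=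
  match s in hexpr x y return Hom (oeval x) (oeval y) with
  | HId x => idm (oeval x)
  | HComp g f => heval g ∘ heval f
  | HTen f g => heval f ⊗ heval g
  | HAsc x y z => asc (oeval x) (oeval y) (oeval z)
  | HAsci x y z => asci (oeval x) (oeval y) (oeval z)
  | HLu x => lu (oeval x) | HLui x => lui (oeval x)
  | HRu x => ru (oeval x) | HRui x => rui (oeval x)
  | HGen f => f
  end.

Definition gen_act {x y : oexpr} (f : Hom (oeval x) (oeval y)) (t : Ob C) :
    Hom (oact x t) (oact y t) :=
  normalize y t ∘ (f ⊗ idm t) ∘ denormalize x t.
Arguments gen_act : simpl never.

Fixpoint hact {x y : oexpr} (s : hexpr x y) (t : Ob C) : Hom (oact x t) (oact y t) :=
  match s in hexpr x y return Hom (oact x t) (oact y t) with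
  | HId x => idm _
  | HComp g f => hact g t ∘ hact f t
  | @HTen x y x' y' f g => hact f (oact y' t) ∘ oact_map x (hact g t)
  | HAsc x y z => idm _
  | HAsci x y z => idm _
  | HLu x => idm _ | HLui x => idm _ | HRu x => idm _ | HRui x => idm _
  | HGen f => gen_act f t
  end.

End Words.

Arguments OUnit {C}.

Ltac reassoc := repeat rewrite comp_assoc.

Tactic Notation "chain_rewrite" open_constr(L) :=
  let H := fresh "E" in epose proof L as H; cbn [oact oeval oact_map] in H;
  first [ rewrite (chain_congr8 _ H) | rewrite (chain_congr7 _ H) | rewrite (chain_congr6 _ H)
        | rewrite (chain_congr5 _ H) | rewrite (chain_congr4 _ H) | rewrite (chain_congr3 _ H)
        | rewrite (chain_congr2 _ H) | rewrite H ]; clear H; reassoc;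
  repeat (rewrite ?whisk_comp; reassoc).

Section Coherence.
Context {C : BMC} {HC : is_braided_monoidal C}.

Lemma unit_whisker_inj_l {a b : Ob C} (f g : Hom a b) :
  (idm tunit ⊗ f) = (idm tunit ⊗ g) -> f = g.
Proof.
  intros E. rewrite <- (comp_id_r f), <- (comp_id_r g), <- (lu_lui a). reassoc.
  rewrite <- !lu_nat, E. reflexivity.
Qed.
Lemma unit_whisker_inj_r {a b : Ob C} (f g : Hom a b) :
  (f ⊗ idm tunit) = (g ⊗ idm tunit) -> f = g.
Proof.
  intros E. rewrite <- (comp_id_r f), <- (comp_id_r g), <- (ru_rui a). reassoc.
  rewrite <- !ru_nat, E. reflexivity.
Qed.
Lemma cancel_split_epi {a b c : Ob C} (f g : Hom b c) (i : Hom a b) (j : Hom b a) :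
  i ∘ j = idm _ -> f ∘ i = g ∘ i -> f = g.
Proof.
  intros E1 E2. rewrite <- (comp_id_r f), <- (comp_id_r g), <- E1. reassoc. rewrite E2.
  reflexivity.
Qed.

Lemma kelly_lu_asc (x t : Ob C) : lu (x ⊠ t) ∘ asc tunit x t = (lu x ⊗ idm t).
Proof.
  apply unit_whisker_inj_l.
  apply (cancel_split_epi (i := asc tunit (tunit ⊠ x) t ∘ (asc tunit tunit x ⊗ idm t))
                          (j := (asci tunit tunit x ⊗ idm t) ∘ asci tunit (tunit ⊠ x) t)).
  { reassoc. chain_rewrite (eq_sym (ten_comp_l (asci tunit tunit x) (asc tunit tunit x))).
    rewrite asc_asci, ten_id, comp_id_r, asc_asci. reflexivity. }
  rewrite ten_comp_r. reassoc. chain_rewrite (eq_sym (pentagon tunit tunit x t)).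
  rewrite triangle. rewrite <- (ten_id x t).
  chain_rewrite (eq_sym (asc_nat (ru tunit) (idm x) (idm t))).
  chain_rewrite (eq_sym (asc_nat (idm tunit) (lu x) (idm t))).
  chain_rewrite (eq_sym (ten_comp_l (asc tunit tunit x) (idm tunit ⊗ lu x))).
  rewrite triangle. reflexivity.
Qed.

Lemma oact_map_id (x : oexpr C) (s : Ob C) : oact_map x (idm s) = idm _.
Proof.
  revert s; induction x; intros s; simpl; [apply whisk_id | reflexivity |].
  rewrite IHx2, IHx1. reflexivity.
Qed.

Lemma normalizeK (x : oexpr C) (t : Ob C) : normalize x t ∘ denormalize x t = idm _.
Proof.
  revert t; induction x; intros t; simpl.
  - apply comp_id_l.
  - apply lu_lui.
  - reassoc. chain_rewrite (asc_asci (oeval x1) (oeval x2) t). rewrite comp_id_r.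
    chain_rewrite (eq_sym (ten_comp_r (denormalize x2 t) (normalize x2 t))).
    rewrite IHx2, ten_id, comp_id_r. apply IHx1.
Qed.
Lemma denormalizeK (x : oexpr C) (t : Ob C) : denormalize x t ∘ normalize x t = idm _.
Proof.
  revert t; induction x; intros t; simpl.
  - apply comp_id_l.
  - apply lui_lu.
  - reassoc. chain_rewrite (IHx1 (oact x2 t)). rewrite comp_id_r.
    chain_rewrite (eq_sym (ten_comp_r (normalize x2 t) (denormalize x2 t))).
    rewrite IHx2, ten_id, comp_id_r. apply asci_asc.
Qed.

Lemma normalize_nat (x : oexpr C) {s t : Ob C} (h : Hom s t) :
  normalize x t ∘ (idm (oeval x) ⊗ h) = oact_map x h ∘ normalize x s.
Proof.
  revert s t h; induction x; intros s t h; simpl.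
  - rewrite comp_id_l, comp_id_r. reflexivity.
  - apply lu_nat.
  - rewrite <- (ten_id (oeval x1) (oeval x2)).
    chain_rewrite (asc_nat (idm (oeval x1)) (idm (oeval x2)) h).
    chain_rewrite (eq_sym (ten_comp_r (idm (oeval x2) ⊗ h) (normalize x2 t))).
    rewrite IHx2, ten_comp_r. reassoc.
    chain_rewrite (IHx1 _ _ (oact_map x2 h)). reflexivity.
Qed.
Lemma denormalize_nat (x : oexpr C) {s t : Ob C} (h : Hom s t) :
  denormalize x t ∘ oact_map x h = (idm (oeval x) ⊗ h) ∘ denormalize x s.
Proof.
  apply (cancel_split_epi (i := normalize x s) (j := denormalize x s)). apply normalizeK.
  reassoc. chain_rewrite (eq_sym (normalize_nat x h)). chain_rewrite (denormalizeK x t).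
  rewrite comp_id_l. chain_rewrite (denormalizeK x s). rewrite comp_id_r. reflexivity.
Qed.

Lemma normalize_asc (x y z : oexpr C) (t : Ob C) :
  normalize (OTen x (OTen y z)) t ∘ (asc (oeval x) (oeval y) (oeval z) ⊗ idm t)
  = normalize (OTen (OTen x y) z) t.
Proof.
  cbn. rewrite ten_comp_r, ten_comp_r. reassoc.
  chain_rewrite (eq_sym (pentagon (oeval x) (oeval y) (oeval z) t)).
  chain_rewrite (eq_sym (asc_nat (idm (oeval x)) (idm (oeval y)) (normalize z t))).
  rewrite ten_id. reflexivity.
Qed.

Lemma normalize_heval (x y : oexpr C) (s : hexpr x y) (t : Ob C) :
  normalize y t ∘ (heval s ⊗ idm t) = hact s t ∘ normalize x t.
Proof.
  revert t; induction s; intros t; cbn.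
  - rewrite ten_id, comp_id_l, comp_id_r. reflexivity.
  - rewrite ten_comp_l. reassoc. rewrite IHs1. rewrite <- comp_assoc, IHs2. reassoc. reflexivity.
  - chain_rewrite (asc_nat (heval s1) (heval s2) (idm t)).
    rewrite (ten_split (heval s1) (heval s2 ⊗ idm t)). reassoc.
    chain_rewrite (eq_sym (ten_interchange (heval s1) (normalize y' t))).
    chain_rewrite (IHs1 (oact y' t)).
    chain_rewrite (eq_sym (ten_comp_r (heval s2 ⊗ idm t) (normalize y' t))). rewrite IHs2.
    rewrite ten_comp_r. reassoc. chain_rewrite (normalize_nat x (hact s2 t)). reflexivity.
  - rewrite comp_id_l. exact (normalize_asc x y z t).
  - pose proof (normalize_asc x y z t) as E. cbn in E.
    rewrite comp_id_l, <- E. reassoc.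
    chain_rewrite (eq_sym (ten_comp_l (asci (oeval x) (oeval y) (oeval z))
                                      (asc (oeval x) (oeval y) (oeval z)))).
    rewrite asc_asci, ten_id, comp_id_r. reflexivity.
  - rewrite comp_id_l. chain_rewrite (lu_nat (normalize x t)).
    chain_rewrite (kelly_lu_asc (oeval x) t). reflexivity.
  - rewrite comp_id_l. reassoc. chain_rewrite (lu_nat (normalize x t)).
    chain_rewrite (kelly_lu_asc (oeval x) t).
    chain_rewrite (eq_sym (ten_comp_l (lui (oeval x)) (lu (oeval x)))).
    rewrite lu_lui, ten_id, comp_id_r. reflexivity.
  - rewrite comp_id_l. chain_rewrite (triangle (oeval x) t). reflexivity.
  - rewrite comp_id_l. reassoc. chain_rewrite (triangle (oeval x) t).
    chain_rewrite (eq_sym (ten_comp_l (rui (oeval x)) (ru (oeval x)))).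
    rewrite ru_rui, ten_id, comp_id_r. reflexivity.
  - unfold gen_act. reassoc. chain_rewrite (denormalizeK x t). rewrite comp_id_r. reflexivity.
Qed.

Lemma hact_spec {x y : oexpr C} (s : hexpr x y) (t : Ob C) :
  hact s t = normalize y t ∘ (heval s ⊗ idm t) ∘ denormalize x t.
Proof. rewrite normalize_heval. rewrite <- comp_assoc, normalizeK, comp_id_r. reflexivity. Qed.

(* Coherence: since [_ ⊗ idm tunit] is faithful, equal strict
   interpretations at [t = tunit] force equal morphisms. *)
Lemma heval_eq_of_hact {x y : oexpr C} (s1 s2 : hexpr x y) :
  hact s1 tunit = hact s2 tunit -> heval s1 = heval s2.
Proof.
  intros E. apply unit_whisker_inj_r.
  assert (Hs : forall s : hexpr x y,
            (heval s ⊗ idm tunit) = denormalize y tunit ∘ hact s tunit ∘ normalize x tunit).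
  { intros s. rewrite <- comp_assoc, <- normalize_heval, comp_assoc, denormalizeK, comp_id_l.
    reflexivity. }
  rewrite !Hs, E. reflexivity.
Qed.
Lemma hact_eq_of_heval {x y : oexpr C} (s1 s2 : hexpr x y) (t : Ob C) :
  heval s1 = heval s2 -> hact s1 t = hact s2 t.
Proof. intros E. rewrite !hact_spec, E. reflexivity. Qed.

Lemma gen_act_nat {x y : oexpr C} (f : Hom (oeval x) (oeval y)) {s t : Ob C} (h : Hom s t) :
  gen_act f t ∘ oact_map x h = oact_map y h ∘ gen_act f s.
Proof.
  unfold gen_act. reassoc. chain_rewrite (denormalize_nat x h).
  chain_rewrite (ten_interchange f h). chain_rewrite (normalize_nat y h). reflexivity.
Qed.

End Coherence.

Global Opaque gen_act.

Ltac chain_simpl :=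
  repeat (rewrite ?oact_map_id, ?whisk_id, ?comp_id_l, ?comp_id_r, ?whisk_comp; reassoc).

Ltac reify_ob o :=
  lazymatch o with
  | @ten _ ?a ?b => let x := reify_ob a in let y := reify_ob b in constr:(OTen x y)
  | @tunit ?C => constr:(@OUnit C)
  | _ => constr:(OAtom o)
  end.
Ltac reify_hom f :=
  lazymatch f with
  | @comp _ _ _ _ ?g ?h => let sg := reify_hom g in let sh := reify_hom h in constr:(HComp sg sh)
  | @tenm _ _ _ _ _ ?g ?h => let sg := reify_hom g in let sh := reify_hom h in constr:(HTen sg sh)
  | @idm _ ?a => let x := reify_ob a in constr:(HId x)
  | @asc _ ?a ?b ?c =>
      let x := reify_ob a in let y := reify_ob b in let z := reify_ob c in constr:(HAsc x y z)
  | @asci _ ?a ?b ?c =>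
      let x := reify_ob a in let y := reify_ob b in let z := reify_ob c in constr:(HAsci x y z)
  | @lu _ ?a => let x := reify_ob a in constr:(HLu x)
  | @lui _ ?a => let x := reify_ob a in constr:(HLui x)
  | @ru _ ?a => let x := reify_ob a in constr:(HRu x)
  | @rui _ ?a => let x := reify_ob a in constr:(HRui x)
  | _ => lazymatch type of f with
         | @Hom _ ?a ?b =>
             let x := reify_ob a in let y := reify_ob b in constr:(HGen (x:=x) (y:=y) f)
         end
  end.

Ltac strictify :=
  lazymatch goal with |- ?l = ?r =>
    let sl := reify_hom l in let sr := reify_hom r in
    change (heval sl = heval sr); apply heval_eq_of_hact;
    cbn [hact oact_map oact oeval]; chain_simpl
  end.
Ltac strictify_at H t :=
  lazymatch type of H with ?l = ?r =>
    let sl := reify_hom l in let sr := reify_hom r in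
    let E := fresh in
    pose proof (hact_eq_of_heval (s1:=sl) (s2:=sr) t H) as E; clear H; rename E into H;
    cbn [hact oact_map oact oeval] in H;
    repeat (rewrite ?oact_map_id, ?whisk_id, ?comp_id_l, ?comp_id_r, ?whisk_comp in H;
            repeat rewrite comp_assoc in H)
  end.
Ltac strictify_all H :=
  lazymatch type of H with ?l = ?r =>
    let sl := reify_hom l in let sr := reify_hom r in
    let E := fresh in
    pose proof (fun t => hact_eq_of_heval (s1:=sl) (s2:=sr) t H) as E; clear H; rename E into H;
    cbn [hact oact_map oact oeval] in H;
    repeat (first [ setoid_rewrite oact_map_id in H | setoid_rewrite whisk_id in H
                  | setoid_rewrite comp_id_l in H | setoid_rewrite comp_id_r in H
                  | setoid_rewrite whisk_comp in H | setoid_rewrite comp_assoc in H ])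
  end.

(* Interchange of two adjacent factors of a strict chain: one of them is a
   generator acting on atoms the other one does not touch. *)
Ltac peel y A := lazymatch y with
 | @OAtom _ ?a => lazymatch A with @whisk _ a _ _ ?h => h end
 | @OUnit _ => A
 | @OTen _ ?y1 ?y2 => let A1 := peel y1 A in peel y2 A1
 end.
Ltac commute_pair A B :=
  lazymatch A with
  | @whisk _ ?a _ _ ?A0 =>
     lazymatch B with
     | @whisk _ a _ _ ?B0 => let E := commute_pair A0 B0 in constr:(whisk_square a E)
     | @gen_act _ ?x ?y ?f ?s =>
         let h := peel y A in constr:(eq_sym (gen_act_nat (x:=x) (y:=y) f h))
     end
  | @gen_act _ ?x ?y ?f ?t =>
     lazymatch B with
     | @gen_act _ ?x' ?y' ?f' ?s =>
         match constr:(tt) with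
         | _ => let h := peel x B in constr:(gen_act_nat (x:=x) (y:=y) f h)
         | _ => let h := peel y' A in constr:(eq_sym (gen_act_nat (x:=x') (y:=y') f' h))
         end
     | _ => let h := peel x B in constr:(gen_act_nat (x:=x) (y:=y) f h)
     end
  end.
Ltac nth_factor n c := lazymatch n with
 | O => lazymatch c with ?r ∘ ?l => l | _ => c end
 | Datatypes.S ?m => lazymatch c with ?r ∘ ?l => nth_factor m r end
 end.
Ltac chain_length c :=
  lazymatch c with
  | ?r ∘ ?l => let n := chain_length r in constr:(Datatypes.S n)
  | _ => constr:(1)
  end.

(* [interchange_l i] swaps the factors [i] and [i+1] (counted from the left)
   of the left-hand side. *)
Ltac interchange_l i := lazymatch goal with |- ?l = ?r =>
  let n := chain_length l in let k := eval compute in (n - i - 1) in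
  let B := nth_factor k l in let A := nth_factor (Datatypes.S k) l in
  let E := commute_pair A B in
  let H := fresh in pose proof E as H; cbn [oact_map] in H;
  etransitivity; [ chain_rewrite H; reflexivity | ]; clear H end.
Ltac interchange_r i := symmetry; interchange_l i; symmetry.

Ltac whisker_hyp l H :=
  lazymatch l with
  | nil => idtac
  | cons ?a ?l' => whisker_hyp l' H; eapply (whisk_congr a) in H; rewrite ?whisk_comp in H
  end.
(* [chain_rewrite under [a1; ...; an] E] rewrites with [E] whiskered on the
   left by [a1], ..., [an]. *)
Tactic Notation "chain_rewrite" "under" constr(l) open_constr(L) :=
  let H := fresh in epose proof L as H; whisker_hyp l H; chain_rewrite H; clear H.

Notation gen11 := (@gen_act _ (OAtom _) (OAtom _)).
Notation gen21 := (@gen_act _ (OTen (OAtom _) (OAtom _)) (OAtom _)).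
Notation gen12 := (@gen_act _ (OAtom _) (OTen (OAtom _) (OAtom _))).
Notation gen01 := (@gen_act _ OUnit (OAtom _)).
Notation gen10 := (@gen_act _ (OAtom _) OUnit).
Notation gen22 := (@gen_act _ (OTen (OAtom _) (OAtom _)) (OTen (OAtom _) (OAtom _))).

Section Braiding.
Context {C : BMC} {HC : is_braided_monoidal C}.

Lemma br_ten_r (a b c : Ob C) : br a (b ⊠ c) =
  asci b c a ∘ (idm b ⊗ br a c) ∘ asc b a c ∘ (br a b ⊗ idm c) ∘ asci a b c.
Proof.
  chain_rewrite (eq_sym (hexagon1 a b c)). chain_rewrite (asci_asc b c a).
  rewrite comp_id_l, <- comp_assoc, asc_asci, comp_id_r. reflexivity.
Qed.
Lemma br_ten_l (a b c : Ob C) : br (a ⊠ b) c =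
  asc c a b ∘ (br a c ⊗ idm b) ∘ asci a c b ∘ (idm a ⊗ br b c) ∘ asc a b c.
Proof.
  chain_rewrite (eq_sym (hexagon2 a b c)). chain_rewrite (asc_asci c a b).
  rewrite comp_id_l, <- comp_assoc, asci_asc, comp_id_r. reflexivity.
Qed.
Lemma br_inj (a b : Ob C) {x : Ob C} (f g : Hom x (a ⊠ b)) : br a b ∘ f = br a b ∘ g -> f = g.
Proof.
  intros E. rewrite <- (comp_id_l f), <- (comp_id_l g), <- (bri_br a b), <- !comp_assoc, E.
  reflexivity.
Qed.

Lemma lu_br (a : Ob C) : lu a ∘ br a tunit = ru a.
Proof.
  apply unit_whisker_inj_r. apply (br_inj (a:=a) (b:=tunit)).
  transitivity (lu (tunit ⊠ a)
    ∘ ((idm tunit ⊗ br a tunit) ∘ asc tunit a tunit ∘ (br a tunit ⊗ idm tunit))).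
  - reassoc. chain_rewrite (lu_nat (br a tunit)). chain_rewrite (kelly_lu_asc a tunit).
    chain_rewrite (eq_sym (ten_comp_l (br a tunit) (lu a))). reflexivity.
  - rewrite <- hexagon1. reassoc. chain_rewrite (kelly_lu_asc tunit a).
    chain_rewrite (eq_sym (br_nat (idm a) (lu tunit))). chain_rewrite (triangle a tunit).
    reflexivity.
Qed.
Lemma ru_br (a : Ob C) : ru a ∘ br tunit a = lu a.
Proof.
  assert (kelly_ru : ru (tunit ⊠ a) ∘ asci tunit a tunit = (idm tunit ⊗ ru a))
    by (strictify; reflexivity).
  assert (kelly_ru' : ru (a ⊠ tunit) ∘ asci a tunit tunit = (idm a ⊗ ru tunit))
    by (strictify; reflexivity).
  assert (triangle' : (ru tunit ⊗ idm a) ∘ asci tunit tunit a = (idm tunit ⊗ lu a))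
    by (strictify; reflexivity).
  apply unit_whisker_inj_l. apply (br_inj (a:=tunit) (b:=a)).
  transitivity (ru (a ⊠ tunit)
    ∘ ((br tunit a ⊗ idm tunit) ∘ asci tunit a tunit ∘ (idm tunit ⊗ br tunit a))).
  - reassoc. chain_rewrite (ru_nat (br tunit a)). chain_rewrite kelly_ru.
    chain_rewrite (eq_sym (ten_comp_r (br tunit a) (ru a))). reflexivity.
  - rewrite <- hexagon2. reassoc. chain_rewrite kelly_ru'.
    chain_rewrite (eq_sym (br_nat (ru tunit) (idm a))). chain_rewrite triangle'. reflexivity.
Qed.
Lemma br_unit_l (a : Ob C) : br tunit a = rui a ∘ lu a.
Proof. rewrite <- (ru_br a). reassoc. rewrite rui_ru, comp_id_l. reflexivity. Qed.
Lemma br_unit_r (a : Ob C) : br a tunit = lui a ∘ ru a.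
Proof. rewrite <- (lu_br a). reassoc. rewrite lui_lu, comp_id_l. reflexivity. Qed.

Lemma br_slide_point_l (N M : Ob C) (u : Hom tunit N) (s : Ob C) :
  gen22 (br N M) s ∘ gen01 u (M ⊠ s) = whisk M (gen01 u s).
Proof.
  assert (E : br N M ∘ (u ⊗ idm M) = (idm M ⊗ u) ∘ rui M ∘ lu M).
  { rewrite br_nat, br_unit_l. reassoc. reflexivity. }
  strictify_at E s. exact E.
Qed.
Lemma br_slide_point_r (N M : Ob C) (v : Hom tunit M) (s : Ob C) :
  gen22 (br N M) s ∘ whisk N (gen01 v s) = gen01 v (N ⊠ s).
Proof.
  assert (E : br N M ∘ (idm N ⊗ v) = (v ⊗ idm N) ∘ lui N ∘ ru N).
  { rewrite br_nat, br_unit_r. reassoc. reflexivity. }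
  strictify_at E s. exact E.
Qed.
Lemma br_slide_mul_r (N M : Ob C) (f : Hom (M ⊠ M) M) (s : Ob C) :
  gen22 (br N M) s ∘ whisk N (gen21 f s)
  = gen21 f (N ⊠ s) ∘ whisk M (gen22 (br N M) s) ∘ gen22 (br N M) (M ⊠ s).
Proof.
  assert (E : br N M ∘ (idm N ⊗ f) = (f ⊗ idm N) ∘ (asci M M N ∘ (idm M ⊗ br N M)
                ∘ asc M N M ∘ (br N M ⊗ idm M) ∘ asci N M M)).
  { rewrite br_nat, br_ten_r. reflexivity. }
  strictify_at E s. exact E.
Qed.
Lemma br_slide_mul_l (N M : Ob C) (g : Hom (N ⊠ N) N) (s : Ob C) :
  gen22 (br N M) s ∘ gen21 g (M ⊠ s)
  = whisk M (gen21 g s) ∘ gen22 (br N M) (N ⊠ s) ∘ whisk N (gen22 (br N M) s).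
Proof.
  assert (E : br N M ∘ (g ⊗ idm M) = (idm M ⊗ g) ∘ (asc M N N ∘ (br N M ⊗ idm N)
                ∘ asci N M N ∘ (idm N ⊗ br N M) ∘ asc N N M)).
  { rewrite br_nat, br_ten_l. reflexivity. }
  strictify_at E s. exact E.
Qed.
Lemma br_slide_map_r (N M M' : Ob C) (h : Hom M M') (s : Ob C) :
  gen22 (br N M') s ∘ whisk N (gen11 h s) = gen11 h (N ⊠ s) ∘ gen22 (br N M) s.
Proof.
  assert (E : br N M' ∘ (idm N ⊗ h) = (h ⊗ idm N) ∘ br N M) by apply br_nat.
  strictify_at E s. exact E.
Qed.
Lemma br_slide_map_l (N N' M : Ob C) (h : Hom N N') (s : Ob C) :
  gen22 (br N' M) s ∘ gen11 h (M ⊠ s) = whisk M (gen11 h s) ∘ gen22 (br N M) s.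
Proof.
  assert (E : br N' M ∘ (h ⊗ idm M) = (idm M ⊗ h) ∘ br N M) by apply br_nat.
  strictify_at E s. exact E.
Qed.
Lemma br_slide_copoint_l (N M : Ob C) (e : Hom N tunit) (s : Ob C) :
  whisk M (gen10 e s) ∘ gen22 (br N M) s = gen10 e (M ⊠ s).
Proof.
  assert (E : (idm M ⊗ e) ∘ br N M = rui M ∘ lu M ∘ (e ⊗ idm M)).
  { rewrite <- br_unit_l, br_nat. reflexivity. }
  strictify_at E s. exact E.
Qed.
Lemma br_slide_copoint_r (N M : Ob C) (e : Hom M tunit) (s : Ob C) :
  gen10 e (N ⊠ s) ∘ gen22 (br N M) s = whisk N (gen10 e s).
Proof.
  assert (E : (e ⊗ idm N) ∘ br N M = lui N ∘ ru N ∘ (idm N ⊗ e)).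
  { rewrite <- br_unit_r, br_nat. reflexivity. }
  strictify_at E s. exact E.
Qed.
Lemma br_slide_copro_r (N M M1 M2 : Ob C) (f : Hom M (M1 ⊠ M2)) (s : Ob C) :
  gen12 f (N ⊠ s) ∘ gen22 (br N M) s
  = whisk M1 (gen22 (br N M2) s) ∘ gen22 (br N M1) (M2 ⊠ s) ∘ whisk N (gen12 f s).
Proof.
  assert (E : (f ⊗ idm N) ∘ br N M = (asci M1 M2 N ∘ (idm M1 ⊗ br N M2) ∘ asc M1 N M2
                ∘ (br N M1 ⊗ idm M2) ∘ asci N M1 M2) ∘ (idm N ⊗ f)).
  { rewrite <- br_ten_r, br_nat. reflexivity. }
  strictify_at E s. exact E.
Qed.
Lemma br_slide_point3_r (N X Y Z : Ob C) (t : Hom tunit (X ⊠ (Y ⊠ Z))) (s : Ob C) :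
  whisk X (whisk Y (gen22 (br N Z) s)) ∘ whisk X (gen22 (br N Y) (Z ⊠ s))
  ∘ gen22 (br N X) (Y ⊠ Z ⊠ s)
  ∘ whisk N (@gen_act _ OUnit (OTen (OAtom X) (OTen (OAtom Y) (OAtom Z))) t s)
  = @gen_act _ OUnit (OTen (OAtom X) (OTen (OAtom Y) (OAtom Z))) t (N ⊠ s).
Proof.
  assert (E : br N (X ⊠ (Y ⊠ Z)) ∘ (idm N ⊗ t) = (t ⊗ idm N) ∘ lui N ∘ ru N).
  { rewrite br_nat, br_unit_r. reassoc. reflexivity. }
  rewrite br_ten_r, (br_ten_r N Y Z) in E.
  strictify_at E s. exact E.
Qed.

End Braiding.

Section TensorMonoid.
Context {C : BMC} {HC : is_braided_monoidal C}.

Section Strict.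
Variables (M : Ob C) (mM : Hom (M ⊠ M) M) (eM : Hom tunit M).
Hypothesis HM : is_monoid mM eM.

Lemma monoid_assoc_strict (s : Ob C) :
  gen21 mM s ∘ gen21 mM (M ⊠ s) = gen21 mM s ∘ whisk M (gen21 mM s).
Proof. destruct HM as [E _]. strictify_at E s. exact E. Qed.
Lemma monoid_lunit_strict (s : Ob C) : gen21 mM s ∘ gen01 eM (M ⊠ s) = idm _.
Proof. destruct HM as [_ [E _]]. strictify_at E s. exact E. Qed.
Lemma monoid_runit_strict (s : Ob C) : gen21 mM s ∘ whisk M (gen01 eM s) = idm _.
Proof. destruct HM as [_ [_ E]]. strictify_at E s. exact E. Qed.

End Strict.

Variables (M N : Ob C) (mM : Hom (M ⊠ M) M) (eM : Hom tunit M)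
          (mN : Hom (N ⊠ N) N) (eN : Hom tunit N).

Definition incl_l : Hom M (M ⊠ N) := (idm M ⊗ eN) ∘ rui M.
Definition incl_r : Hom N (M ⊠ N) := (eM ⊗ idm N) ∘ lui N.

Hypotheses (HM : is_monoid mM eM) (HN : is_monoid mN eN).

Lemma tensor_mult_assoc : tensor_mult mM mN ∘ (tensor_mult mM mN ⊗ idm (M ⊠ N))
  = tensor_mult mM mN ∘ (idm (M ⊠ N) ⊗ tensor_mult mM mN) ∘ asc _ _ _.
Proof.
  unfold tensor_mult. strictify.
  interchange_l 3. interchange_l 2. chain_rewrite (monoid_assoc_strict HM _).
  chain_rewrite under [M] (br_slide_mul_r N mM _). interchange_r 2.
  chain_rewrite under [M; M] (br_slide_mul_l M mN _).
  chain_rewrite under [M; M; M] (monoid_assoc_strict HN _).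
  interchange_r 5. interchange_r 4. interchange_r 6. reflexivity.
Qed.
Lemma tensor_mult_lunit :
  tensor_mult mM mN ∘ (tensor_unit eM eN ⊗ idm (M ⊠ N)) = lu (M ⊠ N).
Proof.
  unfold tensor_mult, tensor_unit. strictify.
  interchange_l 3. interchange_l 2. chain_rewrite (monoid_lunit_strict HM _). chain_simpl.
  chain_rewrite (br_slide_point_l M eN _). chain_rewrite under [M] (monoid_lunit_strict HN _).
  chain_simpl. reflexivity.
Qed.
Lemma tensor_mult_runit :
  tensor_mult mM mN ∘ (idm (M ⊠ N) ⊗ tensor_unit eM eN) = ru (M ⊠ N).
Proof.
  unfold tensor_mult, tensor_unit. strictify.
  chain_rewrite under [M] (br_slide_point_r N eM _). interchange_l 2.
  chain_rewrite (monoid_runit_strict HM _). chain_simpl.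
  chain_rewrite under [M] (monoid_runit_strict HN _). chain_simpl. reflexivity.
Qed.
Lemma tensor_monoid : is_monoid (tensor_mult mM mN) (tensor_unit eM eN).
Proof.
  split; [apply tensor_mult_assoc | split; [apply tensor_mult_lunit | apply tensor_mult_runit]].
Qed.

Lemma tensor_mult_incl_l :
  tensor_mult mM mN ∘ (incl_l ⊗ idm (M ⊠ N)) = (mM ⊗ idm N) ∘ asci M M N.
Proof.
  unfold tensor_mult, incl_l. strictify.
  chain_rewrite under [M] (br_slide_point_l M eN _).
  chain_rewrite under [M; M] (monoid_lunit_strict HN _). chain_simpl. reflexivity.
Qed.
Lemma tensor_mult_incl_lr : tensor_mult mM mN ∘ (incl_l ⊗ incl_r) = idm (M ⊠ N).
Proof.
  unfold tensor_mult, incl_l, incl_r. strictify.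
  chain_rewrite under [M] (br_slide_point_l M eN _).
  chain_rewrite under [M; M] (monoid_lunit_strict HN _). chain_simpl.
  chain_rewrite (monoid_runit_strict HM _). reflexivity.
Qed.

End TensorMonoid.

Section MonoidMorphisms.
Context {C : BMC} {HC : is_braided_monoidal C}.
Variables (M N M' N' K : Ob C) (mM : Hom (M ⊠ M) M) (eM : Hom tunit M)
  (mN : Hom (N ⊠ N) N) (eN : Hom tunit N)
  (mM' : Hom (M' ⊠ M') M') (eM' : Hom tunit M') (mN' : Hom (N' ⊠ N') N') (eN' : Hom tunit N')
  (mK : Hom (K ⊠ K) K) (eK : Hom tunit K).

Lemma idm_monoid_morphism : is_monoid_morphism mM eM mM eM (idm M).
Proof. split; [rewrite comp_id_l, ten_id, comp_id_r | rewrite comp_id_l]; reflexivity. Qed.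

Lemma comp_monoid_morphism (f : Hom M N) (g : Hom N K) :
  is_monoid_morphism mM eM mN eN f -> is_monoid_morphism mN eN mK eK g ->
  is_monoid_morphism mM eM mK eK (g ∘ f).
Proof.
  intros [F1 F2] [G1 G2]. split.
  - rewrite <- comp_assoc, F1. reassoc. rewrite G1, ten_comp. reassoc. reflexivity.
  - rewrite <- comp_assoc, F2. exact G2.
Qed.

Lemma tensor_monoid_morphism (f : Hom M M') (g : Hom N N') :
  is_monoid_morphism mM eM mM' eM' f -> is_monoid_morphism mN eN mN' eN' g ->
  is_monoid_morphism (tensor_mult mM mN) (tensor_unit eM eN)
                     (tensor_mult mM' mN') (tensor_unit eM' eN') (f ⊗ g).
Proof.
  intros [Hf1 Hf2] [Hg1 Hg2]. unfold tensor_mult, tensor_unit. split.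
  - strictify_all Hf1. strictify_all Hg1. strictify.
    interchange_l 1. chain_rewrite (Hf1 _). interchange_l 1. interchange_l 2. interchange_l 3.
    chain_rewrite under [M; M] (Hg1 _).
    interchange_l 6. chain_rewrite under [M] (eq_sym (br_slide_map_l M g _)). interchange_l 3.
    chain_rewrite under [M] (eq_sym (br_slide_map_r N' f _)).
    interchange_l 2. interchange_l 3. interchange_l 5. reflexivity.
  - strictify_all Hf2. strictify_all Hg2. strictify.
    interchange_l 1. chain_rewrite (Hf2 _). interchange_l 1. chain_rewrite (Hg2 _). reflexivity.
Qed.

Lemma asc_monoid_morphism :
  is_monoid_morphism (tensor_mult (tensor_mult mM mN) mK) (tensor_unit (tensor_unit eM eN) eK)
    (tensor_mult mM (tensor_mult mN mK)) (tensor_unit eM (tensor_unit eN eK)) (asc M N K).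
Proof.
  unfold tensor_mult, tensor_unit. rewrite br_ten_r, br_ten_l. split.
  - strictify. interchange_l 3. interchange_l 4. reflexivity.
  - strictify. reflexivity.
Qed.

Lemma counit_r_monoid_morphism (e : Hom N tunit) :
  is_monoid_morphism mN eN (unit_mult C) (idm tunit) e ->
  is_monoid_morphism (tensor_mult mM mN) (tensor_unit eM eN) mM eM (ru M ∘ (idm M ⊗ e)).
Proof.
  intros [H1 H2]. unfold tensor_mult, tensor_unit, unit_mult in *.
  strictify_all H1. strictify_all H2. split.
  - strictify. interchange_l 1. chain_rewrite under [M; M] (H1 tunit). interchange_l 3.
    chain_rewrite under [M] (br_slide_copoint_l M e _). reflexivity.
  - strictify. interchange_l 1. chain_rewrite (H2 _). chain_simpl. reflexivity.
Qed.
Lemma counit_l_monoid_morphism (e : Hom M tunit) :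
  is_monoid_morphism mM eM (unit_mult C) (idm tunit) e ->
  is_monoid_morphism (tensor_mult mM mN) (tensor_unit eM eN) mN eN (lu N ∘ (e ⊗ idm N)).
Proof.
  intros [H1 H2]. unfold tensor_mult, tensor_unit, unit_mult in *.
  strictify_all H1. strictify_all H2. split.
  - strictify. chain_rewrite (H1 _). interchange_l 2. interchange_l 1.
    chain_rewrite under [M] (br_slide_copoint_r N e _). reflexivity.
  - strictify. chain_rewrite (H2 _). chain_simpl. reflexivity.
Qed.

End MonoidMorphisms.

Ltac strictify_hyp H := unfold incl_l, incl_r, tensor_unit, unit_mult in H; strictify_all H.

Section Opwreath.
Context {C : BMC} {HC : is_braided_monoidal C}.
Variables (A B : Ob C) (mA : Hom (A ⊠ A) A) (eA : Hom tunit A)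
          (mB : Hom (B ⊠ B) B) (eB : Hom tunit B)
          (del : Hom B (B ⊠ B)) (eps : Hom B tunit)
          (gamma : Hom A (A ⊠ B)) (tau : Hom tunit (A ⊠ B ⊠ B)).

Hypothesis HA : is_monoid mA eA.
Hypothesis HB : is_monoid mB eB.
Hypothesis del_coassoc : asc B B B ∘ (del ⊗ idm B) ∘ del = (idm B ⊗ del) ∘ del.
Hypothesis del_counit_l : lu B ∘ (eps ⊗ idm B) ∘ del = idm B.
Hypothesis del_counit_r : ru B ∘ (idm B ⊗ eps) ∘ del = idm B.
Hypothesis del_morph : is_monoid_morphism mB eB (tensor_mult mB mB) (tensor_unit eB eB) del.
Hypothesis eps_morph : is_monoid_morphism mB eB (unit_mult C) (idm tunit) eps.
Hypothesis gamma_morph : is_monoid_morphism mA eA (mAB mA mB) (eAB eA eB) gamma.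
Hypothesis gamma_counit : ru A ∘ (idm A ⊗ eps) ∘ gamma = idm A.
Hypothesis tau_coassoc :
  dot (mABB mA mB) tau (asc A B B ∘ (gamma ⊗ idm B) ∘ gamma) ∘ lui A
  = dot (mABB mA mB) ((idm A ⊗ del) ∘ gamma) tau ∘ rui A.
Hypothesis tau_cocycle :
  dot (mABBB mA mB) ((idm A ⊗ (asc B B B ∘ (del ⊗ idm B))) ∘ tau)
      ((idm A ⊗ asc B B B) ∘ asc A (B ⊠ B) B ∘ (tau ⊗ eB) ∘ lui tunit) ∘ lui tunit
  = dot (mABBB mA mB) ((idm A ⊗ (idm B ⊗ del)) ∘ tau)
      (asc A B (B ⊠ B) ∘ (gamma ⊗ idm (B ⊠ B)) ∘ tau) ∘ lui tunit.
Hypothesis tau_normal_r :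
  (idm A ⊗ ru B) ∘ (idm A ⊗ (idm B ⊗ eps)) ∘ tau = (eA ⊗ eB) ∘ lui tunit.
Hypothesis tau_normal_l :
  (idm A ⊗ lu B) ∘ (idm A ⊗ (eps ⊗ idm B)) ∘ tau = (eA ⊗ eB) ∘ lui tunit.

Let z := z_of mA eA mB gamma.
Let d := d_of mA eA mB del tau.
Let w := w_of eA eps.

Lemma z_mult :
  z ∘ (idm B ⊗ mA)
  = (mA ⊗ idm B) ∘ asci A A B ∘ (idm A ⊗ z) ∘ asc A B A ∘ (z ⊗ idm A) ∘ asci B A A.
Proof.
  unfold z, z_of, dot, mAB. strictify.
  pose proof (proj1 gamma_morph) as gamma_mult. unfold mAB in gamma_mult. strictify_hyp gamma_mult.
  pose proof (tensor_mult_incl_l mA HB) as incl_l_mult. strictify_hyp incl_l_mult.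
  pose proof (tensor_mult_incl_lr HA HB) as incl_lr_mult. strictify_hyp incl_lr_mult.
  pose proof (tensor_mult_assoc HA HB) as mult_assoc. strictify_hyp mult_assoc.
  chain_rewrite under [B] (gamma_mult _).
  chain_rewrite (eq_sym (incl_l_mult _)). interchange_r 2. chain_rewrite (eq_sym (mult_assoc _)).
  chain_rewrite (incl_lr_mult _). chain_simpl.
  interchange_r 2. chain_rewrite (mult_assoc _). interchange_r 3. interchange_r 2. interchange_l 4.
  reflexivity.
Qed.

Lemma z_unit : z ∘ (idm B ⊗ eA) ∘ rui B = (eA ⊗ idm B) ∘ lui B.
Proof.
  unfold z, z_of, dot, mAB. strictify.
  pose proof (proj2 gamma_morph) as gamma_unit. unfold eAB in gamma_unit. strictify_hyp gamma_unit.
  pose proof (tensor_mult_runit HA HB) as mult_runit. strictify_hyp mult_runit.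
  chain_rewrite under [B] (gamma_unit _). interchange_l 2. interchange_l 3.
  chain_rewrite (mult_runit _). chain_simpl. reflexivity.
Qed.

Lemma w_z : mA ∘ (w ⊗ idm A) = mA ∘ (idm A ⊗ w) ∘ z.
Proof.
  unfold z, w, z_of, w_of, dot, mAB. strictify.
  pose proof gamma_counit as counit. strictify_hyp counit.
  pose proof (proj1 (counit_r_monoid_morphism mA eA eps_morph)) as proj_mult.
  strictify_hyp proj_mult.
  chain_rewrite (monoid_lunit_strict HA _). chain_simpl.
  chain_rewrite (monoid_runit_strict HA _). chain_simpl.
  chain_rewrite (proj_mult _). interchange_r 3. interchange_r 2.
  chain_rewrite (monoid_lunit_strict HA _). chain_simpl.
  chain_rewrite under [B] (counit _). chain_simpl. reflexivity.
Qed.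

Lemma d_w_l :
  (mA ⊗ idm B) ∘ asci A A B ∘ (idm A ⊗ (w ⊗ idm B)) ∘ d = (eA ⊗ idm B) ∘ lui B.
Proof.
  unfold d, w, d_of, w_of, dot, mABB, mBB. strictify.
  pose proof tau_normal_l as normal. strictify_hyp normal.
  pose proof del_counit_l as counit. strictify_hyp counit.
  pose proof (proj1 (tensor_monoid_morphism (idm_monoid_morphism mA eA)
                       (counit_l_monoid_morphism mB eB eps_morph))) as proj_mult.
  strictify_hyp proj_mult.
  pose proof (tensor_mult_runit HA HB) as mult_runit. strictify_hyp mult_runit.
  chain_rewrite (monoid_runit_strict HA _). chain_simpl. chain_rewrite (proj_mult _).
  interchange_l 3. interchange_l 2. interchange_l 3. chain_rewrite (counit _). chain_simpl.
  chain_rewrite under [B] (normal _). interchange_l 2. interchange_l 3.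
  chain_rewrite (mult_runit _). chain_simpl. reflexivity.
Qed.

Lemma d_w_r :
  (mA ⊗ idm B) ∘ asci A A B ∘ (idm A ⊗ z) ∘ (idm A ⊗ (idm B ⊗ w)) ∘ d
  = (eA ⊗ idm B) ∘ lui B.
Proof.
  pose proof z_unit as z_unit'. unfold z, z_of, dot, mAB in z_unit'. strictify_hyp z_unit'.
  unfold d, w, z, d_of, w_of, z_of, dot, mABB, mBB, mAB. strictify.
  pose proof tau_normal_r as normal. strictify_hyp normal.
  pose proof del_counit_r as counit. strictify_hyp counit.
  pose proof (proj1 (tensor_monoid_morphism (idm_monoid_morphism mA eA)
                       (counit_r_monoid_morphism mB eB eps_morph))) as proj_mult.
  strictify_hyp proj_mult.
  pose proof (tensor_mult_runit HA HB) as mult_runit. strictify_hyp mult_runit.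
  chain_rewrite under [A] (z_unit' _). chain_rewrite (monoid_runit_strict HA _). chain_simpl.
  chain_rewrite (proj_mult _). interchange_l 3. interchange_l 2. interchange_l 3.
  chain_rewrite (counit _). chain_simpl.
  chain_rewrite under [B] (normal _). interchange_l 2. interchange_l 3.
  chain_rewrite (mult_runit _). chain_simpl. reflexivity.
Qed.

Lemma z_twice :
  asc A B B ∘ (z ⊗ idm B) ∘ asci B A B ∘ (idm B ⊗ z) ∘ asc B B A
  = tensor_mult mA (tensor_mult mB mB)
    ∘ (((eA ⊗ idm (B ⊠ B)) ∘ lui (B ⊠ B)) ⊗ (asc A B B ∘ (gamma ⊗ idm B) ∘ gamma)).
Proof.
  unfold z, z_of, dot, mAB, tensor_mult. rewrite !br_ten_l. strictify.
  interchange_l 3. interchange_l 2. chain_rewrite (monoid_lunit_strict HA _). chain_simpl.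
  interchange_l 6. interchange_l 5. chain_rewrite under [B] (monoid_lunit_strict HA _). chain_simpl.
  interchange_r 6. interchange_r 5. interchange_r 4. interchange_r 3. interchange_r 2.
  chain_rewrite (monoid_lunit_strict HA _). chain_simpl.
  interchange_l 3. chain_rewrite under [B] (br_slide_copro_r B gamma _).
  interchange_l 2. interchange_l 3. reflexivity.
Qed.

Lemma d_z :
  (mA ⊗ idm (B ⊠ B)) ∘ asci A A (B ⊠ B)
    ∘ (idm A ⊗ asc A B B) ∘ (idm A ⊗ (z ⊗ idm B)) ∘ (idm A ⊗ asci B A B)
    ∘ (idm A ⊗ (idm B ⊗ z)) ∘ (idm A ⊗ asc B B A) ∘ asc A (B ⊠ B) A ∘ (d ⊗ idm A)
  = (mA ⊗ idm (B ⊠ B)) ∘ asci A A (B ⊠ B) ∘ (idm A ⊗ d) ∘ z.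
Proof.
  assert (z_def : z = tensor_mult mA mB ∘ (((eA ⊗ idm B) ∘ lui B) ⊗ gamma)) by reflexivity.
  strictify_hyp z_def.
  assert (d_def : d = tensor_mult mA (tensor_mult mB mB) ∘ (((eA ⊗ del) ∘ lui B) ⊗ tau) ∘ rui B)
    by reflexivity.
  strictify_hyp d_def.
  pose proof z_twice as z_twice'. strictify_hyp z_twice'.
  pose proof (tensor_mult_incl_l mA (tensor_monoid HB HB)) as incl_l_mult.
  strictify_hyp incl_l_mult.
  pose proof (tensor_mult_incl_lr HA (tensor_monoid HB HB)) as incl_lr_mult.
  strictify_hyp incl_lr_mult.
  pose proof (tensor_mult_assoc HA (tensor_monoid HB HB)) as mult_assoc. strictify_hyp mult_assoc.
  pose proof tau_coassoc as coassoc. unfold dot, mABB, mBB in coassoc. strictify_hyp coassoc.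
  pose proof (proj1 (tensor_monoid_morphism (idm_monoid_morphism mA eA) del_morph)) as del_mult.
  strictify_hyp del_mult.
  strictify.
  chain_rewrite under [A] (z_twice' _). chain_rewrite (eq_sym (incl_l_mult _)).
  interchange_l 3. interchange_l 2. chain_rewrite (eq_sym (mult_assoc _)).
  chain_rewrite (incl_lr_mult _). chain_simpl.
  chain_rewrite (d_def _). interchange_l 3. interchange_l 2. chain_rewrite (mult_assoc _).
  interchange_l 4. interchange_l 3. interchange_l 2. interchange_l 5. interchange_l 4.
  interchange_l 3. interchange_l 6. interchange_l 5. chain_rewrite under [B] (coassoc _).
  chain_rewrite (d_def _). chain_rewrite (z_def _). interchange_r 3. interchange_r 2.
  chain_rewrite (eq_sym (mult_assoc _)). chain_rewrite (incl_lr_mult _). chain_simpl.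
  interchange_r 3. chain_rewrite (del_mult _). chain_rewrite (mult_assoc _).
  interchange_r 5. interchange_r 4. interchange_r 3. interchange_r 2. interchange_r 3.
  interchange_r 6. reflexivity.
Qed.

(* The two sides of (5) without their common last factor [d], written as
   multiplications in A ⊗ B ⊗ B ⊗ B; (5) then reduces to the 2-cocycle condition. *)
Lemma d_left_as_dot :
  (mA ⊗ idm (B ⊠ B ⊠ B)) ∘ asci A A (B ⊠ B ⊠ B)
    ∘ (idm A ⊗ (idm A ⊗ asc B B B)) ∘ (idm A ⊗ asc A (B ⊠ B) B) ∘ (idm A ⊗ (d ⊗ idm B))
  = tensor_mult mA (tensor_mult mB (tensor_mult mB mB))
    ∘ ((idm A ⊗ (asc B B B ∘ (del ⊗ idm B)))
       ⊗ ((idm A ⊗ asc B B B) ∘ asc A (B ⊠ B) B ∘ (tau ⊗ eB) ∘ lui tunit)) ∘ rui (A ⊠ B ⊠ B).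
Proof.
  unfold d, d_of, dot, mABB, mBB, tensor_mult. rewrite !br_ten_l. strictify.
  interchange_l 7. interchange_l 6. interchange_l 5. interchange_l 4. interchange_l 3.
  chain_rewrite under [A] (monoid_lunit_strict HA _). chain_simpl.
  interchange_l 7. interchange_r 7. interchange_r 8. interchange_r 5. interchange_r 6.
  interchange_r 7. interchange_r 10. interchange_r 9. interchange_r 8.
  chain_rewrite under [A; B] (br_slide_point3_r B tau _).
  interchange_r 9. interchange_r 8. interchange_r 7. interchange_r 6. interchange_r 5.
  chain_rewrite under [A; A; B; B; B; B] (monoid_runit_strict HB _). chain_simpl.
  interchange_l 7. reflexivity.
Qed.

Lemma d_right_as_dot :
  (mA ⊗ idm (B ⊠ B ⊠ B)) ∘ asci A A (B ⊠ B ⊠ B)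
    ∘ (idm A ⊗ asc A B (B ⊠ B)) ∘ (idm A ⊗ (z ⊗ idm (B ⊠ B)))
    ∘ (idm A ⊗ asci B A (B ⊠ B)) ∘ (idm A ⊗ (idm B ⊗ d))
  = tensor_mult mA (tensor_mult mB (tensor_mult mB mB))
    ∘ ((idm A ⊗ (idm B ⊗ del)) ⊗ (asc A B (B ⊠ B) ∘ (gamma ⊗ idm (B ⊠ B)) ∘ tau))
    ∘ rui (A ⊠ B ⊠ B).
Proof.
  unfold d, z, d_of, z_of, dot, mABB, mBB, mAB, tensor_mult. rewrite !br_ten_l. strictify.
  interchange_l 12. interchange_l 11. interchange_l 10. interchange_l 9. interchange_l 8.
  chain_rewrite under [A; B] (monoid_lunit_strict HA _). chain_simpl.
  interchange_l 4. interchange_l 3. chain_rewrite under [A] (monoid_lunit_strict HA _). chain_simpl.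
  interchange_l 4. interchange_l 5. interchange_l 6.
  chain_rewrite under [A; B] (br_slide_copro_r B gamma _).
  chain_rewrite under [A; B; B] (br_slide_copro_r B gamma _). interchange_l 11.
  interchange_l 3. interchange_l 4. interchange_l 5. interchange_l 6. interchange_l 8. interchange_l 7.
  reflexivity.
Qed.

Lemma d_coassoc :
  (mA ⊗ idm (B ⊠ B ⊠ B)) ∘ asci A A (B ⊠ B ⊠ B)
    ∘ (idm A ⊗ (idm A ⊗ asc B B B)) ∘ (idm A ⊗ asc A (B ⊠ B) B) ∘ (idm A ⊗ (d ⊗ idm B)) ∘ d
  = (mA ⊗ idm (B ⊠ B ⊠ B)) ∘ asci A A (B ⊠ B ⊠ B)
    ∘ (idm A ⊗ asc A B (B ⊠ B)) ∘ (idm A ⊗ (z ⊗ idm (B ⊠ B)))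
    ∘ (idm A ⊗ asci B A (B ⊠ B)) ∘ (idm A ⊗ (idm B ⊗ d)) ∘ d.
Proof.
  assert (d_def : d = tensor_mult mA (tensor_mult mB mB) ∘ (((eA ⊗ del) ∘ lui B) ⊗ tau) ∘ rui B)
    by reflexivity.
  strictify_hyp d_def.
  pose proof d_left_as_dot as left_dot. strictify_hyp left_dot.
  pose proof d_right_as_dot as right_dot. strictify_hyp right_dot.
  pose proof (tensor_mult_assoc HA (tensor_monoid HB (tensor_monoid HB HB))) as mult_assoc.
  strictify_hyp mult_assoc.
  pose proof (proj1 (tensor_monoid_morphism (idm_monoid_morphism mA eA)
     (comp_monoid_morphism (tensor_monoid_morphism del_morph (idm_monoid_morphism mB eB))
                           (asc_monoid_morphism mB eB mB eB mB eB)))) as del_l_mult.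
  strictify_hyp del_l_mult.
  pose proof (proj1 (tensor_monoid_morphism (idm_monoid_morphism mA eA)
     (tensor_monoid_morphism (idm_monoid_morphism mB eB) del_morph))) as del_r_mult.
  strictify_hyp del_r_mult.
  pose proof del_coassoc as coassoc. strictify_hyp coassoc.
  pose proof tau_cocycle as cocycle. unfold dot, mABBB, mBBB, mBB in cocycle. strictify_hyp cocycle.
  strictify.
  chain_rewrite (left_dot _). interchange_l 4. interchange_l 3. chain_rewrite (d_def _).
  chain_rewrite (del_l_mult _). chain_rewrite (mult_assoc _).
  interchange_l 4. interchange_l 3. interchange_l 2. interchange_l 3. interchange_l 5. interchange_l 4.
  chain_rewrite (coassoc _). chain_rewrite under [B] (cocycle _).
  chain_rewrite (right_dot _). interchange_r 4. interchange_r 3. chain_rewrite (d_def _).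
  chain_rewrite (del_r_mult _). chain_rewrite (mult_assoc _).
  interchange_r 4. interchange_r 3. interchange_r 2. interchange_r 3. interchange_r 5. interchange_r 4.
  reflexivity.
Qed.

End Opwreath.

Unset Implicit Arguments.

Theorem proposition4p2 (C : BMC) (HC : is_braided_monoidal C)
    (A B : Ob C) (mA : Hom (A ⊠ A) A) (eA : Hom tunit A)
    (mB : Hom (B ⊠ B) B) (eB : Hom tunit B)
    (del : Hom B (B ⊠ B)) (eps : Hom B tunit)
    (gamma : Hom A (A ⊠ B)) (tau : Hom tunit (A ⊠ B ⊠ B)) :
  is_monoid mA eA ->
  is_bimonoid mB eB del eps ->
  is_twisted_coaction mA eA mB eB del eps gamma tau ->
  is_mixed_opwreath mA eA
    (d_of mA eA mB del tau) (w_of eA eps) (z_of mA eA mB gamma).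
Proof.
  intros HA (HB & (del_coassoc & del_counit_l & del_counit_r) & del_morph & eps_morph)
    (gamma_morph & gamma_counit & tau_coassoc & tau_cocycle & tau_normal_r & tau_normal_l).
  repeat split.
  - eapply z_mult; eassumption.
  - eapply z_unit; eassumption.
  - eapply w_z; eassumption.
  - eapply d_z; eassumption.
  - eapply d_coassoc; eassumption.
  - eapply d_w_l; eassumption.
  - eapply d_w_r; eassumption.
Qed.
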